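(* Let $\mathbf{i}=(i_1,\dots,i_r)$, $\mathbf{j}=(j_1,\dots,j_r)$ be sequences of positive integers with equal sums $N$, and suppose $g=\det M(\mathbf{i};\mathbf{j})$ is nonzero and irreducible. Then every indeterminate in each of the blocks $A^k$, $k=1,\dots,r$, appears in the top homogeneous component of $g$.
   Context: $M(\mathbf{i};\mathbf{j})$ is the $N\times N$ matrix whose rows are divided into blocks of sizes $i_1,\dots,i_r$ (top to bottom) and columns into blocks of sizes $j_r,\dots,j_1$ (left to right; the block of size $j_t$ is column block $t$). Row block $s$ has an $i_s\times j_s$ matrix $A^s$ of indeterminates in column block $s$; for $s\ge 2$ the matrix $I_{i_s,j_{s-1}}$ in column block $s-1$; zeros in column blocks $t<s-1$; and indeterminates in column blocks $t>s$. $I_{c,d}$ is the $c\times d$ matrix with $1$s on its main diagonal and $0$s elsewhere. All indeterminates are distinct. The top homogeneous component of a polynomial is its homogeneous component of highest degree. *)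

From HB Require Import structures.
From mathcomp Require Import all_boot all_order all_algebra.
From mathcomp Require Import mpoly.
Set Implicit Arguments. Unset Strict Implicit. Unset Printing Implicit Defensive.
Import Order.TTheory GRing.Theory.
Local Open Scope ring_scope.

(* Index (0-based) of the block containing position [p], for consecutive
   blocks of sizes [sz] (listed in order starting from position 0). *)
Definition blk (sz : seq nat) (p : nat) : nat :=
  find (fun s => (p < sumn (take s.+1 sz))%N) (iota 0 (size sz)).

Definition boff (sz : seq nat) (p : nat) : nat :=
  (p - sumn (take (blk sz p) sz))%N.

(* Row p lies in row block (rowblk i p).+1 (blocks i_1,...,i_r from the top). *)
Definition rowblk (i : seq nat) (p : nat) : nat := blk i p.
Definition rowoff (i : seq nat) (p : nat) : nat := boff i p.

(* Columns are divided into blocks of sizes j_r,...,j_1 from left to right;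
   the block of size j_t is column block t.  Column q lies in column block
   (colblk j q).+1 (0-based index t-1). *)
Definition colblk (j : seq nat) (q : nat) : nat :=
  ((size j).-1 - blk (rev j) q)%N.
Definition coloff (j : seq nat) (q : nat) : nat := boff (rev j) q.

Definition Nsz (i : seq nat) : nat := sumn i.

(* The indeterminate placed at position (p,q) is the variable 'X_(p,q) of
   the polynomial ring in N*N variables over K (variables at positions that
   carry constants are simply unused). *)
Definition Mvar (N : nat) (p q : 'I_N) : 'I_(N * N) := mxvec_index p q.

Definition Mij (K : fieldType) (i j : seq nat) :
  'M[{mpoly K[Nsz i * Nsz i]}]_(Nsz i) :=
  \matrix_(p < Nsz i, q < Nsz i)
    let s := rowblk i p in
    let t := colblk j q in
    if (s <= t)%N then 'X_(Mvar p q)                      (* A^s and blocks t > s *)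
    else if (t.+1 == s)%N then
      (rowoff i p == coloff j q)%:R                      (* I_{i_s, j_{s-1}} *)
    else 0.

Definition irreducible_elt (R : comUnitRingType) (g : R) : Prop :=
  [/\ g != 0, g \isn't a GRing.unit &
      forall a b : R, g = a * b -> a \is a GRing.unit \/ b \is a GRing.unit].

(* Top homogeneous component: the homogeneous component of total degree
   (msize g).-1, the highest degree occurring in g. *)
Definition tophom (n : nat) (K : fieldType) (g : {mpoly K[n]}) : {mpoly K[n]} :=
  pihomog mdeg (msize g).-1 g.

Definition appears (n : nat) (K : fieldType) (k : 'I_n) (g : {mpoly K[n]}) : Prop :=
  exists2 m, m \in msupp g & (0 < m k)%N.

From HB Require Import structures.
From mathcomp Require Import all_boot all_order all_algebra.
From mathcomp Require Import mpoly.
From mathcomp Require Import perm zify.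
Set Implicit Arguments. Unset Strict Implicit. Unset Printing Implicit Defensive.
Import Order.TTheory GRing.Theory.

(* A permutation [s] contributes to [det M(i;j)] iff each entry [(x, s x)] is an
   indeterminate or a one of an identity block; its term is then, up to sign,
   the product of its indeterminate entries, and this monomial determines [s].
   Hence nothing cancels and the top component collects the permutations with
   the most indeterminate entries.  Counting the columns available to the rows
   below the first [t] row blocks shows that row block [t+1] must use at least
   [(j_1 + ... + j_t) - (i_1 + ... + i_t)] identity entries, and an explicit
   permutation attains all these bounds at once.  Irreducibility rules out
   [j_1 + ... + j_(t-1) = i_1 + ... + i_t], which would make [M(i;j)] block
   triangular; the resulting slack lets an exchange argument route any entry
   of any block [A^t] through a permutation of maximal degree. *)

Lemma card_ord_range n a b : #|[set x : 'I_n | a <= x < b]| = minn b n - a.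
Proof.
rewrite -sum1_card big_mkcond /=.
rewrite (eq_bigr (fun x : 'I_n => ((a <= x < b) : nat))); last by move=> x _; rewrite inE; case: ifP.
rewrite -(big_mkord xpredT (fun x => ((a <= x < b) : nat))).
elim: n => [|n IH]; first by rewrite big_geq // minn0.
by rewrite big_nat_recr //= IH; case: (leqP a n) => h1; case: (leqP b n) => h2 /=; lia.
Qed.

Definition psum (sz : seq nat) (s : nat) : nat := sumn (take s sz).

Lemma leq_psum sz : {homo psum sz : a b / a <= b}.
Proof. by move=> a b le; rewrite /psum -(subnKC le) takeD sumn_cat leq_addr. Qed.

Lemma psum_le_sumn sz s : psum sz s <= sumn sz.
Proof. by rewrite /psum -{2}(cat_take_drop s sz) sumn_cat leq_addr. Qed.

Lemma psum0 sz : psum sz 0 = 0.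
Proof. by rewrite /psum take0. Qed.

Lemma psum_oversize sz s : size sz <= s -> psum sz s = sumn sz.
Proof. by move=> h; rewrite /psum take_oversize. Qed.

Lemma psum1_gt0 sz : all (fun x => 0 < x) sz -> 0 < size sz -> 0 < psum sz 1.
Proof. by case: sz => //= x sz /andP[x_gt0 _]; rewrite /psum /= take0 addn0. Qed.

Lemma psum_pred_size_lt sz : all (fun x => 0 < x) sz -> 0 < size sz ->
  psum sz (size sz).-1 < sumn sz.
Proof.
move=> pos sz_gt0; have lt : (size sz).-1 < size sz by rewrite prednK.
have x_gt0 : 0 < nth 0 sz (size sz).-1 by apply: (allP pos); rewrite mem_nth.
have := congr1 sumn (cat_take_drop (size sz).-1 sz).
by rewrite sumn_cat (drop_nth 0 lt) /= /psum; lia.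
Qed.

Lemma psum_rev sz s : psum (rev sz) s = sumn sz - psum sz (size sz - s).
Proof.
have := congr1 sumn (cat_take_drop (size sz - s) sz).
by rewrite /psum take_rev sumn_rev sumn_cat; lia.
Qed.

Lemma blk_bounds sz p : p < sumn sz ->
  blk sz p < size sz /\ psum sz (blk sz p) <= p < psum sz (blk sz p).+1.
Proof.
move=> hp; have szp : 0 < size sz by case: sz hp.
set a := fun s => p < psum sz s.+1.
have hhas : has a (iota 0 (size sz)).
  apply/hasP; exists (size sz).-1; first by rewrite mem_iota add0n prednK ?leqnn.
  by rewrite /a prednK // psum_oversize.
have lt : blk sz p < size sz by move: (hhas); rewrite has_find size_iota.
split=> //; have := nth_find 0 hhas; rewrite -/(blk sz p) nth_iota // add0n /a => ->.
rewrite andbT; case E: (blk sz p) => [|b]; first by rewrite psum0.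
have hb : b < find a (iota 0 (size sz)) by rewrite -/(blk sz p) E.
have := before_find 0 hb; rewrite nth_iota ?add0n; last by rewrite -E ltnW.
by rewrite /a => /negbT; rewrite -leqNgt.
Qed.

Lemma leq_blk sz t p : p < sumn sz -> (t <= blk sz p) = (psum sz t <= p).
Proof.
move=> hp; have [_ /andP[lo hi]] := blk_bounds hp.
case: leqP => [le|lt]; first by rewrite (leq_trans (leq_psum sz le)).
by apply/esym/negbTE; rewrite -ltnNge (leq_trans hi) // leq_psum.
Qed.

Lemma blk_eq sz p s : psum sz s <= p < psum sz s.+1 -> blk sz p = s.
Proof.
case/andP=> lo hi; have hp : p < sumn sz := leq_trans hi (psum_le_sumn _ _).
by apply/eqP; rewrite eqn_leq leq_blk // lo andbT leqNgt leq_blk // -ltnNge.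
Qed.

Lemma eq_Mvar n (p q p' q' : 'I_n) : (Mvar p q == Mvar p' q') = (p == p') && (q == q').
Proof.
apply/eqP/andP => [|[/eqP-> /eqP->] //].
by rewrite /Mvar /mxvec_index => /cast_ord_inj/enum_rank_inj [-> ->].
Qed.

Section BlockDeterminant.
Local Open Scope ring_scope.

Lemma det_castmx (R : comPzRingType) m n (e : m = n) (A : 'M[R]_m) :
  \det (castmx (e, e) A) = \det A.
Proof. by case: n / e. Qed.

Lemma det_row0 (R : comPzRingType) n (A : 'M[R]_n) (x : 'I_n) :
  (forall y, A x y = 0) -> \det A = 0.
Proof. by move=> h; rewrite (expand_det_row _ x) big1 // => y _; rewrite h mul0r. Qed.

Variables (R S : comUnitRingType) (f : {rmorphism R -> S}) (n1 n2 : nat).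
Hypotheses (n1_gt0 : (0 < n1)%N) (n2_gt0 : (0 < n2)%N).

Lemma shift_subproof (y : 'I_(n1 + n2)) : ((if y < n1 then n2 + y else y - n1) < n1 + n2)%N.
Proof. by have := ltn_ord y; case: ifP => h; lia. Qed.

Definition shift_fun (y : 'I_(n1 + n2)) : 'I_(n1 + n2) := Ordinal (shift_subproof y).

Lemma shift_fun_inj : injective shift_fun.
Proof.
move=> x y /(congr1 val) /=; have := ltn_ord x; have := ltn_ord y.
by case: ifP => hx; case: ifP => hy => *; apply: ord_inj; lia.
Qed.

Definition shift_perm : 'S_(n1 + n2) := perm shift_fun_inj.

Lemma shift_permE y : val (shift_perm y) = (if y < n1 then n2 + y else y - n1)%N.
Proof. by rewrite permE. Qed.

(* Shifting the columns cyclically by [n2] makes [A] block upper triangular;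
   [f] kills the first row of the upper-left block and the first column of the
   lower-right block, so neither diagonal block has a unit determinant. *)
Lemma det_not_irreducible (A : 'M[R]_(n1 + n2)) :
  (forall x y : 'I_(n1 + n2), (n1 <= x)%N -> (n2 <= y)%N -> A x y = 0) ->
  (forall x y : 'I_(n1 + n2), x = 0%N :> nat -> f (A x y) = 0) ->
  (forall x y : 'I_(n1 + n2), y = 0%N :> nat -> f (A x y) = 0) ->
  ~ irreducible_elt (\det A).
Proof.
move=> zero row0 col0 [_ _ irr]; set B := col_perm shift_perm A.
have hB : \det B = \det A * (-1) ^+ (shift_perm^-1)%g.
  by rewrite /B col_permE det_mulmx det_perm.
have hdl : dlsubmx B = 0.
  apply/matrixP => x y; rewrite !mxE; apply: zero; rewrite /= ?shift_permE /= ?ltn_ord; lia.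
have hdet : \det A = ((-1) ^+ (shift_perm^-1)%g * \det (ulsubmx B)) * \det (drsubmx B).
  rewrite -mulrA -(det_ublock _ (ursubmx B)) -hdl submxK hB.
  by rewrite [\det A * _]mulrC signrMK.
case: (irr _ _ hdet) => /(rmorph_unit f); rewrite -?det_map_mx ?rmorphM /= -?det_map_mx.
- rewrite (@det_row0 _ _ _ (Ordinal n1_gt0)) ?mulr0 ?unitr0 // => y.
  by rewrite !mxE; apply: row0.
- rewrite -det_tr (@det_row0 _ _ _ (Ordinal n2_gt0)) ?unitr0 // => x.
  by rewrite !mxE; apply: col0; rewrite shift_permE /=; case: ifP => //; lia.
Qed.

End BlockDeterminant.

Section Pattern.
Variables (i j : seq nat).
Hypothesis size_ij : size i = size j.
Hypothesis sumn_ij : sumn i = sumn j.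

Local Notation N := (Nsz i).

Lemma rowblk_bounds p : p < N ->
  rowblk i p < size i /\ psum i (rowblk i p) <= p < psum i (rowblk i p).+1.
Proof. exact: blk_bounds. Qed.

Lemma leq_rowblk t p : p < N -> (t <= rowblk i p) = (psum i t <= p).
Proof. exact: leq_blk. Qed.

Lemma rowblk_eq p t : psum i t <= p < psum i t.+1 -> rowblk i p = t.
Proof. exact: blk_eq. Qed.

Lemma rowoffE p : rowoff i p = p - psum i (rowblk i p).
Proof. by []. Qed.

Lemma psum_col_le t : psum j t <= N.
Proof. by rewrite /Nsz sumn_ij psum_le_sumn. Qed.

Lemma colblk_bounds q : q < N ->
  [/\ colblk j q < size i, psum j (colblk j q) <= N.-1 - q < psum j (colblk j q).+1
    & coloff j q = psum j (colblk j q).+1 + q - N].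
Proof.
move=> hq; have hq' : q < sumn (rev j) by rewrite sumn_rev -sumn_ij.
have [hb /andP[lo hi]] := blk_bounds hq'.
rewrite /coloff /boff /colblk -/(psum (rev j) (blk (rev j) q)).
move: hb lo hi; rewrite size_rev !psum_rev -size_ij -sumn_ij -/N.
set b := blk (rev j) q => hb lo hi.
have -> : ((size i).-1 - b).+1 = size i - b by lia.
have e : size i - b.+1 = (size i).-1 - b by lia.
rewrite e in hi.
have := psum_col_le (size i - b); have := psum_col_le ((size i).-1 - b).
have := leq_psum j (leq_pred (size i - b)); rewrite -subnS e.
by move=> *; split; lia.
Qed.

Lemma leq_colblk t q : q < N -> (t <= colblk j q) = (psum j t <= N.-1 - q).
Proof.
move=> hq; have [_ /andP[lo hi] _] := colblk_bounds hq.
case: leqP => [le|lt]; first by rewrite (leq_trans (leq_psum j le)).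
by apply/esym/negbTE; rewrite -ltnNge (leq_trans hi) // leq_psum.
Qed.

Lemma colblk_eq q t : q < N -> psum j t <= N.-1 - q < psum j t.+1 -> colblk j q = t.
Proof.
move=> hq /andP[lo hi].
by apply/eqP; rewrite eqn_leq leq_colblk // lo andbT leqNgt leq_colblk // -ltnNge.
Qed.

Definition var_entry (p q : nat) := rowblk i p <= colblk j q.

Definition one_entry (p q : nat) :=
  ((colblk j q).+1 == rowblk i p) && (rowoff i p == coloff j q).

Lemma one_entry_var p q : one_entry p q -> ~~ var_entry p q.
Proof. by rewrite /one_entry /var_entry -ltnNge => /andP[/eqP <- _]. Qed.

Lemma one_entry_row_inj p1 p2 q : p1 < N -> p2 < N ->
  one_entry p1 q -> one_entry p2 q -> p1 = p2.
Proof.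
move=> h1 h2 /andP[/eqP e1 /eqP o1] /andP[/eqP e2 /eqP o2].
have [_ /andP[a1 b1]] := rowblk_bounds h1; have [_ /andP[a2 b2]] := rowblk_bounds h2.
rewrite !rowoffE in o1 o2; rewrite -e1 in a1 b1 o1; rewrite -e2 in a2 b2 o2; lia.
Qed.

Lemma one_entry_col_inj p q1 q2 : q1 < N -> q2 < N ->
  one_entry p q1 -> one_entry p q2 -> q1 = q2.
Proof.
move=> h1 h2 /andP[/eqP e1 /eqP o1] /andP[/eqP e2 /eqP o2].
have [_ /andP[a1 b1] d1] := colblk_bounds h1; have [_ /andP[a2 b2] d2] := colblk_bounds h2.
have et : colblk j q1 = colblk j q2 by lia.
rewrite et in a1 b1 d1; lia.
Qed.

(* Row [p] of block [t > 0] meets its identity entry in the column block [t-1],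
   which ends [psum j t] columns from the right. *)
Lemma one_entry_shift p : p < N -> 0 < rowblk i p ->
  rowoff i p < psum j (rowblk i p) - psum j (rowblk i p).-1 ->
  one_entry p (N - psum j (rowblk i p) + rowoff i p).
Proof.
move=> hp t0 ho; set t := rowblk i p in t0 ho *; set o := rowoff i p in ho *.
have hq := psum_col_le t; have hm := leq_psum j (leq_pred t).
have hc : N - psum j t + o < N by lia.
have hcb : colblk j (N - psum j t + o) = t.-1.
  by apply: colblk_eq hc _; rewrite prednK //; apply/andP; split; lia.
have [_ _ hco] := colblk_bounds hc.
by rewrite /one_entry hco hcb prednK // eqxx /=; apply/eqP; lia.
Qed.

Definition admissible (s : 'S_(N)) :=
  [forall x : 'I_N, var_entry x (s x) || one_entry x (s x)].

Definition var_rows (s : 'S_(N)) := [set x : 'I_N | var_entry x (s x)].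

Definition nvar (s : 'S_(N)) := #|var_rows s|.

Definition one_rows (s : 'S_(N)) t := [set x : 'I_N | (rowblk i x == t) && one_entry x (s x)].

Lemma admissibleP (s : 'S_(N)) (x : 'I_N) :
  admissible s -> var_entry x (s x) || one_entry x (s x).
Proof. by move/forallP. Qed.

Lemma card_rowblk_ge t : #|[set x : 'I_N | t <= rowblk i x]| = N - psum i t.
Proof.
have -> : [set x : 'I_N | t <= rowblk i x] = [set x : 'I_N | psum i t <= x < N].
  by apply/setP => x; rewrite !inE leq_rowblk // ltn_ord andbT.
by rewrite card_ord_range minnn.
Qed.

Lemma card_colblk_ge t : #|[set y : 'I_N | t <= colblk j y]| = N - psum j t.
Proof.
have -> : [set y : 'I_N | t <= colblk j y] = [set y : 'I_N | 0 <= y < N - psum j t].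
  by apply/setP => y; rewrite !inE leq_colblk //; have := ltn_ord y; lia.
by rewrite card_ord_range subn0 (minn_idPl (leq_subr _ _)).
Qed.

(* An admissible [s] sends the rows of the blocks [>= t], except the identity
   rows of block [t], into the columns of the blocks [>= t]. *)
Lemma one_rows_lb (s : 'S_(N)) t : admissible s -> psum j t - psum i t <= #|one_rows s t|.
Proof.
move=> adm; set A := [set x : 'I_N | t <= rowblk i x].
have sub : s @: (A :\: one_rows s t) \subset [set y : 'I_N | t <= colblk j y].
  apply/subsetP => y /imsetP[x]; rewrite !inE => /andP[hn hA] ->.
  case/orP: (admissibleP x adm) => [hv|ho]; first exact: leq_trans hA hv.
  move: hn; rewrite ho andbT; case/andP: ho => /eqP e _ hn.
  by rewrite -e in hA hn; lia.
have := subset_leq_card sub; rewrite card_imset; last exact: perm_inj.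
rewrite card_colblk_ge cardsD card_rowblk_ge.
have -> : A :&: one_rows s t = one_rows s t.
  by apply/setIidPr/subsetP => x; rewrite !inE => /andP[/eqP <- _].
have := psum_le_sumn i t; have := psum_col_le t; rewrite /Nsz; move: #|one_rows s t| => m; lia.
Qed.

Lemma psum_admissible (s : 'S_(N)) t : admissible s -> 0 < t -> psum j t.-1 <= psum i t.
Proof.
move=> adm t0; set A := [set x : 'I_N | t <= rowblk i x].
have sub : s @: A \subset [set y : 'I_N | t.-1 <= colblk j y].
  apply/subsetP => y /imsetP[x]; rewrite !inE => hA ->.
  case/orP: (admissibleP x adm) => [hv|/andP[/eqP e _]].
  - exact: leq_trans (leq_pred _) (leq_trans hA hv).
  - by rewrite -e in hA; lia.
have := subset_leq_card sub; rewrite card_imset; last exact: perm_inj.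
rewrite card_colblk_ge card_rowblk_ge.
have := psum_le_sumn i t; have := psum_col_le t.-1; rewrite /Nsz; lia.
Qed.

Lemma rowblk_lt (x : 'I_N) : rowblk i x < size i.
Proof. by have [] := rowblk_bounds (ltn_ord x). Qed.

Lemma nvar_add_one_rows (s : 'S_(N)) : admissible s ->
  nvar s + \sum_(t < size i) #|one_rows s t| = N.
Proof.
move=> adm; rewrite -[X in _ = X]card_ord -(cardsC (var_rows s)) -[#|~: _|]sum1_card.
rewrite (partition_big (fun x => Ordinal (rowblk_lt x)) xpredT) //=.
congr (_ + _); apply: eq_bigr => t _; rewrite -sum1_card; apply: eq_bigl => x.
rewrite !inE -val_eqE /=; case/orP: (admissibleP x adm) => h.
- by rewrite h (negbTE (contraL (@one_entry_var _ _) h)) !andbF.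
- by rewrite h (negbTE (one_entry_var h)) andbT.
Qed.

Section Canonical.
Hypothesis psum_cut : forall t, 0 < t -> psum j t.-1 <= psum i t.

(* [canon_flip] reverses the rows [psum i t <= p < psum j t] of each row block [t];
   composed with the reversal of all columns, it yields a permutation that uses
   as few identity entries as the cut bounds [one_rows_lb] allow. *)
Definition canon_flip p :=
  if p < psum j (rowblk i p) then psum i (rowblk i p) + psum j (rowblk i p) - 1 - p else p.

Lemma rowblk_canon_flip p : p < N -> rowblk i (canon_flip p) = rowblk i p.
Proof.
move=> hp; rewrite /canon_flip; case: ifP => // lt.
have [_ /andP[lo hi]] := rowblk_bounds hp.
have := psum_cut (ltn0Sn (rowblk i p)).
by move=> /= cut; apply: rowblk_eq; apply/andP; split; lia.
Qed.

Lemma canon_flip_lt p : p < N -> canon_flip p < N.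
Proof.
move=> hp; rewrite /canon_flip; case: ifP => // _.
have [_ /andP[lo _]] := rowblk_bounds hp; have := psum_col_le (rowblk i p); lia.
Qed.

Lemma canon_flipK p : p < N -> canon_flip (canon_flip p) = p.
Proof.
move=> hp; have [_ /andP[lo _]] := rowblk_bounds hp.
rewrite {1}/canon_flip rowblk_canon_flip // /canon_flip.
case: (ltnP p (psum j (rowblk i p))) => lt; last by rewrite ltnNge lt.
by rewrite ifT; lia.
Qed.

Lemma canon_subproof (x : 'I_N) : N.-1 - canon_flip x < N.
Proof. by have := ltn_ord x; lia. Qed.

Definition canon_fun (x : 'I_N) : 'I_N := Ordinal (canon_subproof x).

Lemma canon_fun_inj : injective canon_fun.
Proof.
move=> x y /(congr1 val) /= e; apply: ord_inj.
have hx := canon_flip_lt (ltn_ord x); have hy := canon_flip_lt (ltn_ord y).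
by rewrite -(canon_flipK (ltn_ord x)) -(canon_flipK (ltn_ord y)); congr canon_flip; lia.
Qed.

Definition canon : 'S_(N) := perm canon_fun_inj.

Lemma canonE x : val (canon x) = N.-1 - canon_flip x.
Proof. by rewrite permE. Qed.

Lemma var_entry_canon (x : 'I_N) : psum j (rowblk i x) <= x -> var_entry x (canon x).
Proof.
move=> le; rewrite /var_entry leq_colblk // canonE /canon_flip ltnNge le /=.
by have := ltn_ord x; lia.
Qed.

Lemma canon_admissible : admissible canon.
Proof.
apply/forallP => x; have [_ /andP[lo hi]] := rowblk_bounds (ltn_ord x).
case: (leqP (psum j (rowblk i x)) x) => [le|lt]; first by rewrite var_entry_canon.
apply/orP; right; set t := rowblk i x in lo hi lt.
have t0 : 0 < t by move: lt lo; case: (t) => [|//]; rewrite psum0.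
have cut := psum_cut t0; have hq := psum_col_le t.
have -> : nat_of_ord (canon x) = N - psum j t + rowoff i x.
  by rewrite canonE /canon_flip -/t lt rowoffE -/t; lia.
by apply: one_entry_shift => //; rewrite rowoffE -/t; lia.
Qed.

Lemma one_rows_canon t : #|one_rows canon t| <= psum j t - psum i t.
Proof.
have sub : one_rows canon t \subset [set x : 'I_N | psum i t <= x < psum j t].
  apply/subsetP => x; rewrite !inE => /andP[/eqP <- one].
  have [_ /andP[-> _]] := rowblk_bounds (ltn_ord x); rewrite ltnNge /=.
  by apply: contraL one => /var_entry_canon; apply: contraL; apply: one_entry_var.
by apply: leq_trans (subset_leq_card sub) _; rewrite card_ord_range leq_sub2r // geq_minl.
Qed.

Lemma one_rows_canon_le (s : 'S_(N)) t : admissible s -> #|one_rows canon t| <= #|one_rows s t|.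
Proof. by move=> adm; apply: leq_trans (one_rows_canon t) (one_rows_lb t adm). Qed.

Lemma nvar_canon_max (s : 'S_(N)) : admissible s -> nvar s <= nvar canon.
Proof.
move=> adm; have := nvar_add_one_rows adm; have := nvar_add_one_rows canon_admissible.
have : \sum_(t < size i) #|one_rows canon t| <= \sum_(t < size i) #|one_rows s t|.
  by apply: leq_sum => t _; apply: one_rows_canon_le.
lia.
Qed.

Lemma one_rows_max (s : 'S_(N)) t : admissible s -> nvar s = nvar canon -> t < size i ->
  #|one_rows s t| <= psum j t - psum i t.
Proof.
move=> adm max ht.
have eqs : \sum_(u < size i) #|one_rows canon u| = \sum_(u < size i) #|one_rows s u|.
  by have := nvar_add_one_rows adm; have := nvar_add_one_rows canon_admissible; lia.
have := (leqif_sum (fun (u : 'I_(size i)) (_ : true) => leqif_eq (one_rows_canon_le u adm))).2.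
rewrite eqs eqxx => /esym/forallP/(_ (Ordinal ht))/eqP <-.
exact: one_rows_canon.
Qed.

End Canonical.

Lemma swap_var_rows (s : 'S_(N)) (a y : 'I_N) :
  admissible s -> var_entry a (s a) -> var_entry y (s y) ->
  var_entry y (s a) -> var_entry a (s y) ->
  let s' := (tperm a y * s)%g in [/\ admissible s', nvar s' = nvar s & s' a = s y].
Proof.
move=> adm ha hy hya hay s'.
have E x : s' x = s (tperm a y x) by rewrite permM.
split; last by rewrite E tpermL.
- apply/forallP => x; rewrite E.
  by case: tpermP => [->|->|_ _]; rewrite ?hay ?hya ?admissibleP.
- rewrite /nvar; apply: eq_card => x; rewrite !inE E.
  by case: tpermP => [->|->|_ _]; rewrite ?ha ?hy ?hya ?hay.
Qed.

(* Rotating the values of [s] on the rows [a], [b] and [d := s^-1 c] turns the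
   identity row [a] into a variable row and the variable row [b] into an
   identity row, while [d] stays a variable row. *)
Lemma exchange_one_row (s : 'S_(N)) (a b c : 'I_N) :
  admissible s -> one_entry a (s a) -> rowblk i b = rowblk i a ->
  var_entry b (s b) -> one_entry b c ->
  exists s' : 'S_(N), [/\ admissible s', nvar s' = nvar s, var_entry a (s' a),
     forall x, x != b -> var_entry x (s x) -> var_entry x (s' x) &
     exists2 y, s' y = s a & var_entry y (s a)].
Proof.
move=> adm hoa hba hvb hob; set d := (s^-1)%g c.
have hsd : s d = c by rewrite permKV.
have nab : a != b by apply: contraTneq hvb => <-; apply: one_entry_var.
have ndb : d != b.
  by apply: contraTneq hvb => edb; rewrite -edb hsd; apply: one_entry_var; rewrite edb.
have hvd : var_entry d c.
  case/orP: (admissibleP d adm); rewrite hsd // => hod.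
  by case/eqP: ndb; apply: ord_inj; apply: one_entry_row_inj hod hob.
have nda : d != a by apply: contraTneq hvd => eda; rewrite -hsd eda; apply: one_entry_var.
set s' := (tperm b d * (tperm a b * s))%g.
have E x : s' x = s (tperm a b (tperm b d x)) by rewrite !permM.
have Ea : s' a = s b by rewrite E (tpermD (x := b)) ?tpermL // eq_sym.
have Eb : s' b = c by rewrite E tpermL tpermD // eq_sym.
have Ed : s' d = s a by rewrite E tpermR tpermR.
have Eo x : x != a -> x != b -> x != d -> s' x = s x.
  by move=> xa xb xd; rewrite E !tpermD // eq_sym.
move: (hoa) (hob) => /andP[/eqP ea _] /andP[/eqP eb _].
have hva : var_entry a (s b) by rewrite /var_entry -hba.
have hvda : var_entry d (s a) by move: hvd; rewrite /var_entry; lia.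
exists s'; split.
- apply/forallP => x.
  have [->|xa] := eqVneq x a; first by rewrite Ea hva.
  have [->|xb] := eqVneq x b; first by rewrite Eb hob orbT.
  have [->|xd] := eqVneq x d; first by rewrite Ed hvda.
  by rewrite Eo ?admissibleP.
- rewrite /nvar; have -> : var_rows s' = a |: (var_rows s :\ b).
    apply/setP => x; rewrite !inE.
    have [->|xa] := eqVneq x a; first by rewrite Ea hva.
    have [->|xb] := eqVneq x b; first by rewrite Eb (negbTE (one_entry_var hob)).
    have [->|xd] := eqVneq x d; first by rewrite Ed hvda hsd hvd.
    by rewrite Eo.
  rewrite cardsU1 !inE (negbTE (one_entry_var hoa)) andbF /=.
  by rewrite (cardsD1 b (var_rows s)) !inE hvb.
- by rewrite Ea.
- move=> x xb hx.
  have [->|xa] := eqVneq x a; first by rewrite Ea.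
  have [->|xd] := eqVneq x d; first by rewrite Ed.
  by rewrite Eo.
- by exists d.
Qed.

Section MaximalTerms.
Hypothesis psum_cut : forall t, 0 < t -> psum j t.-1 <= psum i t.
Hypothesis psum_strict : forall t, 0 < t -> t < size i -> psum i t < psum j t ->
  psum j t.-1 < psum i t /\ psum j t < psum i t.+1.

Local Notation canon := (canon psum_cut).

(* Block [t] has [psum j t - psum i t + 1] rows [psum i t <= b <= psum j t], one
   more than its identity rows, so one of them is a variable row whose identity
   column is free to be exchanged with [a]. *)
Lemma max_perm_var_row (s : 'S_(N)) (a : 'I_N) :
  admissible s -> nvar s = nvar canon -> one_entry a (s a) ->
  exists s' : 'S_(N), [/\ admissible s', nvar s' = nvar canon, var_entry a (s' a),
     forall x : 'I_N, rowblk i x != rowblk i a -> var_entry x (s x) -> var_entry x (s' x) &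
     exists2 y, s' y = s a & var_entry y (s a)].
Proof.
move=> adm max hoa; have [hr /andP[lo hi]] := rowblk_bounds (ltn_ord a).
set t := rowblk i a in hr lo hi *.
have t0 : 0 < t by rewrite /t; case/andP: hoa => /eqP <-.
have hm : 0 < #|one_rows s t| by apply/card_gt0P; exists a; rewrite !inE eqxx hoa.
have ht := one_rows_max adm max hr.
have [lt1 lt2] : psum j t.-1 < psum i t /\ psum j t < psum i t.+1.
  by apply: psum_strict => //; lia.
have hq := psum_col_le t.
set C := [set x : 'I_N | psum i t <= x < (psum j t).+1].
have : ~~ (C \subset one_rows s t).
  apply/negP => /subset_leq_card; have := psum_le_sumn i t.+1.
  by rewrite card_ord_range /Nsz; move: #|one_rows s t| ht hm => m; lia.
case/subsetPn => b; rewrite !inE => /andP[lob hib] hbn.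
have hba : rowblk i b = t by apply: rowblk_eq; apply/andP; split; lia.
have hvb : var_entry b (s b).
  by case/orP: (admissibleP b adm) => // hob; rewrite hba eqxx hob in hbn.
have hob : one_entry b (N - psum j t + (b - psum i t)).
  by have := @one_entry_shift b (ltn_ord b); rewrite hba rowoffE hba; apply => //; lia.
have hc : N - psum j t + (b - psum i t) < N by have := ltn_ord b; lia.
have [s' [adm' nv' va' keep' move']] := exchange_one_row adm hoa hba hvb (c := Ordinal hc) hob.
exists s'; split=> //; first by rewrite nv'.
by move=> x hx; apply: keep'; apply: contraNneq hx => ->; rewrite hba.
Qed.

Lemma max_perm_through (p q : 'I_N) : rowblk i p = colblk j q ->
  exists s : 'S_(N), [/\ admissible s, s p = q & forall s', admissible s' -> nvar s' <= nvar s].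
Proof.
move=> e; have adm0 := canon_admissible psum_cut.
have [s1 [adm1 max1 p1]] : exists s1 : 'S_(N),
    [/\ admissible s1, nvar s1 = nvar canon & var_entry p (s1 p)].
  case/orP: (admissibleP p adm0) => h; first by exists canon.
  by have [s' [? ? ? _ _]] := max_perm_var_row adm0 erefl h; exists s'.
have [s2 [adm2 max2 p2 [y ey vy]]] : exists s2 : 'S_(N), [/\ admissible s2,
    nvar s2 = nvar canon, var_entry p (s2 p) & exists2 y, s2 y = q & var_entry y q].
  set y := (s1^-1)%g q; have ey : s1 y = q by rewrite permKV.
  case/orP: (admissibleP y adm1); rewrite ey => h; first by exists s1; split => //; exists y.
  rewrite -ey in h; have [s' [? ? ? keep [y' ey' vy']]] := max_perm_var_row adm1 max1 h.
  rewrite ey in h ey' vy'; exists s'; split => //; last by exists y'.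
  by apply: keep => //; case/andP: h => /eqP <- _; rewrite -e; apply/eqP; lia.
have hy : var_entry y (s2 y) by rewrite ey.
have hyp : var_entry y (s2 p) by move: vy p2; rewrite /var_entry e; lia.
have hpy : var_entry p (s2 y) by rewrite ey /var_entry e.
have [adm3 nv3 e3] := swap_var_rows adm2 p2 hy hyp hpy.
exists (tperm p y * s2)%g; split => //; first by rewrite e3.
by move=> s' adm'; rewrite nv3 max2; apply: nvar_canon_max.
Qed.

End MaximalTerms.

Section Determinant.
Variable K : fieldType.
Local Open Scope ring_scope.
Local Notation M := (Mij K i j).

Lemma Mij_entry (p q : 'I_N) :
  M p q = if var_entry p q then 'X_(Mvar p q) else if one_entry p q then 1 else 0.
Proof.
rewrite /Mij mxE /var_entry /one_entry; case: ifP => // _.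
by case: ifP => //= _; case: ifP.
Qed.

Definition perm_mon (s : 'S_(N)) : 'X_{1..N * N} :=
  (\sum_(x : 'I_N | var_entry x (s x)) U_(Mvar x (s x)))%MM.

Lemma prod_Mij_perm (s : 'S_(N)) :
  \prod_x M x (s x) = if admissible s then 'X_[perm_mon s] else 0.
Proof.
case: ifP => adm.
- rewrite /perm_mon (big_morph _ (@mpolyXD _ K) (@mpolyX0 _ K)) [RHS]big_mkcond /=.
  apply: eq_bigr => x _; rewrite Mij_entry; case: ifP => // hv.
  by case/orP: (admissibleP x adm) => h; rewrite h // in hv *.
- case/negbT/forallPn: adm => x; rewrite negb_or => /andP[h1 h2].
  by rewrite (bigD1 x) //= Mij_entry (negbTE h1) (negbTE h2) mul0r.
Qed.

Lemma perm_mon_Mvar (s : 'S_(N)) (p q : 'I_N) :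
  perm_mon s (Mvar p q) = var_entry p (s p) && (s p == q).
Proof.
rewrite /perm_mon mnm_sumE big_mkcond (bigD1 p) //= big1 ?addn0 => [|x /negbTE xp].
- by rewrite mnm1E eq_Mvar eqxx; case: (var_entry _ _).
- by rewrite mnm1E eq_Mvar xp; case: ifP.
Qed.

Lemma mdeg_perm_mon (s : 'S_(N)) : mdeg (perm_mon s) = nvar s.
Proof.
rewrite /perm_mon mdeg_sum /nvar -sum1_card.
by under eq_bigr do rewrite mdeg1; apply: eq_bigl => x; rewrite inE.
Qed.

Lemma perm_mon_inj (s t : 'S_(N)) : admissible s -> admissible t ->
  perm_mon s = perm_mon t -> s = t.
Proof.
move=> adm_s adm_t e.
have var_eq u v : perm_mon u = perm_mon v ->
    forall x : 'I_N, var_entry x (u x) -> v x = u x /\ var_entry x (v x).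
  move=> euv x hx; have := perm_mon_Mvar v x (u x).
  by rewrite -euv perm_mon_Mvar hx eqxx; case: (var_entry x (v x)) => //=; case: eqP.
apply/permP => x; case/orP: (admissibleP x adm_s) => hs; first by case: (var_eq _ _ e x hs).
case/orP: (admissibleP x adm_t) => ht.
- by case: (var_eq _ _ (esym e) x ht) => ex _; move: (one_entry_var hs); rewrite ex ht.
- by apply: ord_inj; apply: one_entry_col_inj hs ht.
Qed.

Lemma mcoeff_det_Mij m :
  (\det M)@_m = \sum_(s : 'S_(N)) (-1) ^+ s * (admissible s && (perm_mon s == m))%:R.
Proof.
rewrite /determinant raddf_sum /=; apply: eq_bigr => s _.
rewrite prod_Mij_perm !mulr_sign; case: (odd_perm s); rewrite ?mcoeffN;
  by case: (admissible s); rewrite ?mcoeffX ?mcoeff0 ?oppr0.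
Qed.

Lemma mcoeff_det_perm_mon (s : 'S_(N)) : admissible s -> (\det M)@_(perm_mon s) = (-1) ^+ s.
Proof.
move=> adm; rewrite mcoeff_det_Mij (bigD1 s) //= adm eqxx mulr1 big1 ?addr0 // => t nts.
case: (boolP (admissible t)) => adm_t /=; last by rewrite mulr0.
case: eqP => [e|_]; last by rewrite mulr0.
by case/eqP: nts; apply: perm_mon_inj.
Qed.

Lemma msupp_det_Mij m : m \in msupp (\det M) -> exists2 s, admissible s & perm_mon s = m.
Proof.
rewrite mcoeff_msupp mcoeff_det_Mij => hm.
have /existsP[s /andP[adm /eqP e]] : [exists s : 'S_(N), admissible s && (perm_mon s == m)].
  apply: contraNT hm; rewrite negb_exists => /forallP h.
  by apply/eqP; apply: big1 => s _; rewrite (negbTE (h s)) mulr0.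
by exists s.
Qed.

Lemma admissible_of_det : \det M != 0 -> exists s, admissible s.
Proof.
rewrite -msupp_eq0; case E: (msupp _) => [//|m ms] _.
have [s adm _] : exists2 s, admissible s & perm_mon s = m.
  by apply: msupp_det_Mij; rewrite E mem_head.
by exists s.
Qed.

(* No two admissible permutations share a monomial, so nothing cancels in the
   expansion and the top component consists of the terms of maximal [nvar]. *)
Lemma appears_tophom_det (s : 'S_(N)) (p q : 'I_N) :
  admissible s -> s p = q -> var_entry p q ->
  (forall t, admissible t -> (nvar t <= nvar s)%N) ->
  appears (Mvar p q) (tophom (\det M)).
Proof.
move=> adm spq hv max; have cs := mcoeff_det_perm_mon adm.
have hsize : msize (\det M) = (nvar s).+1.
  apply/eqP; rewrite eqn_leq; apply/andP; split.
  - rewrite msizeE; apply/bigmax_leqP_seq => m hm _.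
    by have [t adm_t <-] := msupp_det_Mij hm; rewrite mdeg_perm_mon ltnS max.
  - by rewrite -mdeg_perm_mon msize_mdeg_lt // mcoeff_msupp cs signr_eq0.
exists (perm_mon s); last by rewrite perm_mon_Mvar spq hv eqxx.
rewrite /tophom hsize /= mcoeff_msupp pihomogE raddf_sum /=.
rewrite big_mkcond (bigD1_seq (perm_mon s)) ?msupp_uniq ?mcoeff_msupp ?cs ?signr_eq0 //=.
rewrite mdeg_perm_mon eqxx /= mcoeffZ mcoeffX eqxx mulr1 big1 ?addr0 ?cs ?signr_eq0 //.
by move=> m nm; case: ifP => _ //; rewrite mcoeffZ mcoeffX (negbTE nm) mulr0.
Qed.

End Determinant.

Section Irreducible.
Variable K : fieldType.
Hypothesis first_row_pos : 0 < psum i 1.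
Hypothesis last_col_pos : psum j (size i).-1 < N.

Lemma var_entry_row0 q : 0 < N -> var_entry 0 q.
Proof.
move=> hN; have : ~~ (1 <= rowblk i 0) by rewrite leq_rowblk // -ltnNge.
by rewrite /var_entry -ltnNge ltnS leqn0 => /eqP ->.
Qed.

Lemma var_entry_col0 p : p < N -> var_entry p 0.
Proof.
move=> hp; have [hr _] := rowblk_bounds hp.
have : (size i).-1 <= colblk j 0 by rewrite leq_colblk ?subn0 //; lia.
by rewrite /var_entry; lia.
Qed.

(* If [psum j (u-1) = psum i u], the rows of the blocks [>= u] only meet the
   columns of the blocks [>= u-1], so [M(i;j)] is block triangular. *)
Lemma psum_cut_neq u : irreducible_elt (\det (Mij K i j)) -> 0 < u ->
  0 < psum i u < N -> psum j u.-1 != psum i u.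
Proof.
move=> + u0 /andP[pos ltN]; apply: contraPneq => cut.
have e : N = psum i u + (N - psum i u) by lia.
rewrite -(det_castmx e); apply: (det_not_irreducible (f := meval (fun=> 0%R)) pos).
- lia.
- move=> x y hx hy; rewrite castmxE Mij_entry /var_entry /one_entry.
  set x' := cast_ord _ x; set y' := cast_ord _ y.
  have hrb : u <= rowblk i x' by rewrite leq_rowblk.
  have hcb : colblk j y' < u.-1.
    by rewrite ltnNge leq_colblk // cut; have := ltn_ord y'; rewrite /= in hy *; lia.
  have lt : (colblk j y').+1 < rowblk i x' by lia.
  by rewrite leqNgt (ltnW lt) ltn_eqF.
- move=> x y hx; rewrite castmxE Mij_entry /= hx var_entry_row0 ?mevalXU //; lia.
- move=> x y hy; rewrite castmxE Mij_entry /= hy var_entry_col0 ?mevalXU //.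
  by have := ltn_ord x; lia.
Qed.

Lemma irreducible_psum_strict t : irreducible_elt (\det (Mij K i j)) ->
  (forall u, 0 < u -> psum j u.-1 <= psum i u) ->
  0 < t -> t < size i -> psum i t < psum j t ->
  psum j t.-1 < psum i t /\ psum j t < psum i t.+1.
Proof.
move=> irr cut t0 tr lt.
have pos u : 0 < u -> 0 < psum i u by move=> u0; apply: leq_trans first_row_pos (leq_psum i u0).
have cut1 : psum j t <= psum i t.+1 by apply: (cut t.+1).
split; rewrite ltn_neqAle ?cut1 ?cut ?andbT //.
- by apply: psum_cut_neq => //; rewrite pos //= (leq_trans lt) ?psum_col_le.
- have lt_jN : psum j t < N by apply: leq_ltn_trans last_col_pos; apply: leq_psum; lia.
  have [lt_N|ge_N] := ltnP (psum i t.+1) N; last by apply/eqP; lia.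
  by apply: (psum_cut_neq (u := t.+1)) => //; rewrite pos.
Qed.

End Irreducible.

End Pattern.

Local Open Scope ring_scope.

Theorem corollary6p5 (K : fieldType) (i j : seq nat) :
  size i = size j ->
  all (fun x => 0 < x)%N i -> all (fun x => 0 < x)%N j ->
  sumn i = sumn j ->
  \det (Mij K i j) != 0 ->
  irreducible_elt (\det (Mij K i j)) ->
  forall p q : 'I_(Nsz i), rowblk i p = colblk j q ->
    appears (Mvar p q) (tophom (\det (Mij K i j))).
Proof.
move=> size_ij pos_i pos_j sumn_ij det_neq0 irr p q pq.
have [s adm] := admissible_of_det det_neq0.
have cut := psum_admissible size_ij sumn_ij adm.
have size_gt0 : (0 < size i)%N.
  by have : (0 < sumn i)%N := leq_ltn_trans (leq0n p) (ltn_ord p); case: (i).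
have first_row := psum1_gt0 pos_i size_gt0.
have last_col : (psum j (size i).-1 < Nsz i)%N.
  by rewrite /Nsz sumn_ij size_ij psum_pred_size_lt // -size_ij.
have strict := irreducible_psum_strict size_ij sumn_ij first_row last_col irr cut.
have [s' [adm' spq max']] := max_perm_through size_ij sumn_ij cut strict pq.
by apply: (appears_tophom_det size_ij sumn_ij K adm' spq) max'; rewrite /var_entry pq.
Qed.
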